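(* Let $d=d(n)$ satisfy $12 \le d \le e^{\sqrt[3]{\log n}}$ and let $m = \frac{\log n \,\log\log\log n}{\log d\, \log\log n}$. If $p=p(n) \ge (8d+12)\frac{\log n}{n}$, then for all sufficiently large $n$, the probability that $G(n,p)$ contains a vertex set $S$ with $2 \le |S| \le \frac{n}{dm}$ and $|N(S)| < d|S|$ is at most $e^{-\frac32 pn}$.
   Context: $G(n,p)$ is the Erdős–Rényi random graph on a vertex set $V$ of size $n$ in which each pair of vertices is an edge independently with probability $p$; $\log$ is the natural logarithm. For $S\subseteq V$, the external neighbourhood $N(S)$ is the set of vertices $v \in V\setminus S$ adjacent to some vertex of $S$. *)

From HB Require Import structures.
From mathcomp Require Import all_boot all_order all_algebra.
From mathcomp Require Import all_classical all_reals all_analysis.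
Set Implicit Arguments. Unset Strict Implicit. Unset Printing Implicit Defensive.
Import Order.TTheory GRing.Theory Num.Theory.
Local Open Scope ring_scope.

(* A simple graph on vertex set 'I_n is a set of 2-element subsets (its edges). *)
Definition pairs (n : nat) : {set {set 'I_n}} := [set A : {set 'I_n} | #|A| == 2%N].

Definition nbhd (n : nat) (G : {set {set 'I_n}}) (S : {set 'I_n}) : {set 'I_n} :=
  [set v | (v \notin S) && [exists u in S, [set u; v] \in G]].

(* Probability that G(n,p) satisfies the event E: each of the C(n,2) possible
   edges present independently with probability p. *)
Definition gnp_prob (R : realType) (n : nat) (p : R)
    (E : pred {set {set 'I_n}}) : R :=
  \sum_(G in powerset (pairs n) | E G)
     p ^+ #|G| * (1 - p) ^+ (#|pairs n| - #|G|).

Definition m_param (R : realType) (n : nat) (d : R) : R :=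
  ln (n%:R : R) * ln (ln (ln (n%:R : R))) / (ln d * ln (ln (n%:R : R))).

Definition bad_event (R : realType) (n : nat) (d m : R) : pred {set {set 'I_n}} :=
  fun G => [exists S : {set 'I_n},
    [&& (2 <= #|S|)%N, (#|S|%:R <= (n%:R : R) / (d * m))
      & (#|nbhd G S|%:R < d * #|S|%:R)]].

Arguments gnp_prob [R] n p E.
Arguments bad_event [R] n d m.

From HB Require Import structures.
From mathcomp Require Import all_boot all_order all_algebra.
From mathcomp Require Import all_classical all_reals all_analysis.
From mathcomp Require Import lra zify.
Set Implicit Arguments. Unset Strict Implicit. Unset Printing Implicit Defensive.
Import Order.TTheory GRing.Theory Num.Theory.
Local Open Scope ring_scope.

(** A set S with |N(S)| < d|S| leaves at least n - (d+1)|S| >= 15n/16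
    vertices outside S and N(S), none adjacent to S; since |S| <= n/(dm) and
    m >= 32 for large n, this has probability at most exp(-(15/16) p n |S|).
    A union bound over the pairs (S, N(S)) costs a factor n^(|S|+|N(S)|),
    which p n >= (8d+12) log n absorbs, and summing n^-(|S|+|U|) over all
    pairs of sets S, U gives (1 + 1/n)^(2n) <= e^2. *)

Section SubsetSums.
Variables (R : comNzRingType) (T : finType).

Lemma sum_powerset_binomial (A : {set T}) (x y : R) :
  \sum_(J in powerset A) x ^+ #|J| * y ^+ #|A :\: J| = (x + y) ^+ #|A|.
Proof.
pose a i := if i \in A then x else 0.
pose b i := if i \in A then y else 1.
have -> : (x + y) ^+ #|A| = \prod_i (a i + b i).
  rewrite -prodr_const big_mkcond /=; apply: eq_bigr => i _.
  by rewrite /a /b; case: ifP; rewrite ?add0r.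
rewrite bigA_distr big_mkcond /=; apply: eq_bigr => J _.
rewrite big_if /= powersetE.
case: (boolP (J \subset A)) => [sJA | /subsetPn[i iJ niA]]; last first.
  by rewrite (bigD1 i) //= /a (negbTE niA) !mul0r.
rewrite (eq_bigr (fun=> x)) => [|i /(fintype.subsetP sJA) iA]; last by rewrite /a iA.
rewrite prodr_const; congr (_ * _).
rewrite (bigID (mem A)) /= [X in _ * X]big1 ?mulr1 => [|i]; last first.
  by case/andP=> _ /negbTE niA; rewrite /b niA.
rewrite (eq_bigr (fun=> y)) => [|i /andP[_ iA]]; last by rewrite /b iA.
rewrite prodr_const; congr (_ ^+ _); apply: eq_card => i.
by rewrite !inE [in RHS]unfold_in /= andbC.
Qed.

Lemma sum_subsets_expr (x : R) : \sum_(J : {set T}) x ^+ #|J| = (x + 1) ^+ #|T|.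
Proof.
rewrite -cardsT -sum_powerset_binomial powersetT.
by apply: eq_big => [J|J _]; rewrite ?inE // expr1n mulr1.
Qed.

End SubsetSums.

Definition cross_edges (T : finType) (S W : {set T}) : {set {set T}} :=
  [set [set u; w] | u in S, w in W].

Lemma card_cross_edges (T : finType) (S W : {set T}) :
  [disjoint S & W] -> #|cross_edges S W| = (#|S| * #|W|)%N.
Proof.
move=> dSW; rewrite /cross_edges curry_imset2X card_in_imset ?cardsX //.
move=> [u w] [u' w'] /setXP[/= uS wW] /setXP[/= uS' wW'] E.
have : u \in [set u'; w'] by rewrite -E !inE eqxx.
rewrite !inE => /orP[/eqP eu|/eqP eu]; last first.
  by move: dSW; rewrite disjoint_sym => /disjointFr/(_ wW'); rewrite -eu uS.
have : w \in [set u'; w'] by rewrite -E !inE eqxx orbT.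
rewrite !inE => /orP[/eqP ew|/eqP ew]; last by rewrite eu ew.
by move: dSW => /disjointFr/(_ uS'); rewrite -ew wW.
Qed.

Lemma cross_edges_sub_pairs n (S W : {set 'I_n}) :
  [disjoint S & W] -> cross_edges S W \subset pairs n.
Proof.
move=> dSW; apply/fintype.subsetP => _ /imset2P[u w uS wW ->].
suff uw : u != w by rewrite inE cards2 uw.
by apply: contraTneq uS => ->; move: dSW; rewrite disjoint_sym => /disjointFr->.
Qed.

Lemma disjoint_cross_edges_nbhd n (G : {set {set 'I_n}}) (S : {set 'I_n}) :
  [disjoint G & cross_edges S (~: (S :|: nbhd G S))].
Proof.
apply/pred0P => A /=; apply/negP => /andP[AG /imset2P[u w uS]].
rewrite !inE negb_or => /andP[wS /negP wN] eA; apply: wN.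
by rewrite wS /=; apply/existsP; exists u; rewrite uS -eA.
Qed.

Section RandomGraph.
Variables (R : realType) (n : nat) (p : R).

Lemma gnp_prob_disjoint (F : {set {set 'I_n}}) :
  F \subset pairs n -> gnp_prob n p (fun G => [disjoint G & F]) = (1 - p) ^+ #|F|.
Proof.
move=> sFP; rewrite /gnp_prob.
rewrite (eq_bigl (mem (powerset (pairs n :\: F)))) => [|G]; last first.
  by rewrite /= finset.setDE powersetI finset.in_setI powersetE powersetCE.
rewrite (eq_bigr (fun G : {set {set 'I_n}} =>
  p ^+ #|G| * (1 - p) ^+ #|pairs n :\: F :\: G| * (1 - p) ^+ #|F|)).
  by rewrite -big_distrl /= sum_powerset_binomial addrC subrK expr1n mul1r.
move=> G inG; have sG : G \subset pairs n :\: F by rewrite -powersetE.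
rewrite -mulrA -exprD; congr (_ * _ ^+ _).
have := cardsID F (pairs n); have := cardsID G (pairs n :\: F).
rewrite (finset.setIidPr sFP) (finset.setIidPr sG); lia.
Qed.

Lemma gnp_prob_union_bound (I : finType) (E : pred {set {set 'I_n}})
    (Ei : I -> pred {set {set 'I_n}}) :
  0 <= p <= 1 -> (forall G, E G -> exists i, Ei i G) ->
  gnp_prob n p E <= \sum_i gnp_prob n p (Ei i).
Proof.
move=> /andP[p0 p1] cover; rewrite /gnp_prob.
under [X in _ <= X]eq_bigr => i _ do rewrite big_mkcondr.
rewrite exchange_big /= big_mkcondr /=; apply: ler_sum => G _.
set w := p ^+ #|G| * _.
have ge0 i : 0 <= (if Ei i G then w else 0).
  by case: ifP => _; rewrite ?mulr_ge0 ?exprn_ge0 ?subr_ge0.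
case: (boolP (E G)) => [/cover[i Ei_G] | _]; last by apply: sumr_ge0 => i _.
rewrite (bigD1 i) //= Ei_G lerDl.
by apply: sumr_ge0 => j _.
Qed.

End RandomGraph.

(* [U] stands for the neighbourhood [N(S)]. *)
Definition bad_pair {R : realType} n (d m : R) (S U : {set 'I_n}) : bool :=
  [&& (2 <= #|S|)%N, #|S|%:R <= (n%:R : R) / (d * m) & #|U|%:R < d * #|S|%:R].

Lemma gnp_prob_bad_event_union_bound (R : realType) n (p d m : R) : 0 <= p <= 1 ->
  gnp_prob n p (bad_event n d m) <=
  \sum_(S : {set 'I_n}) \sum_(U : {set 'I_n})
     (if bad_pair d m S U then (1 - p) ^+ (#|S| * #|~: (S :|: U)|) else 0).
Proof.
move=> p01; rewrite pair_bigA /=.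
pose avoid (SU : {set 'I_n} * {set 'I_n}) (G : {set {set 'I_n}}) :=
  bad_pair d m SU.1 SU.2 && [disjoint G & cross_edges SU.1 (~: (SU.1 :|: SU.2))].
apply: (le_trans (gnp_prob_union_bound (Ei := avoid) p01 _)).
  move=> G /existsP[S bad]; exists (S, nbhd G S).
  by rewrite /avoid /= disjoint_cross_edges_nbhd andbT.
apply: ler_sum => -[S U] _; rewrite /avoid /=.
case: (bad_pair d m S U); last by rewrite /gnp_prob big_pred0 // => G; rewrite andbF.
have dSW : [disjoint S & ~: (S :|: U)].
  by rewrite -finset.subsets_disjoint finset.subsetUl.
by rewrite gnp_prob_disjoint ?cross_edges_sub_pairs // card_cross_edges.
Qed.

Lemma exprn_invnD1_le_expR1 (R : realType) n : ((n%:R : R)^-1 + 1) ^+ n <= expR 1.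
Proof.
have [->|n0] := posnP n; first by rewrite expr0 -expR0 ler_expR.
apply: (le_trans (y := expR (n%:R^-1) ^+ n)).
  by rewrite lerXn2r ?nnegrE ?addr_ge0 ?invr_ge0 ?expR_ge0 // addrC expR_ge1Dx.
by rewrite -expRM_natr mulVf // pnatr_eq0 -lt0n.
Qed.

(* The logarithm of [n^(s+u) (1-p)^(s c) <= e^-2 e^(-3pn/2)], with [c] the
   number of vertices outside [S] and [U], and [1 - p <= e^-p]. *)
Lemma expansion_exponent_le (R : realType) (n s u c L p d m : R) :
  1 <= L -> 12 <= d -> 32 <= m -> (8 * d + 12) * L <= p * n -> 0 < p ->
  2 <= s -> s * (d * m) <= n -> u <= d * s -> n - s - u <= c ->
  L * s + L * u + 2 + 3 / 2 * p * n <= p * (s * c).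
Proof.
move=> L1 d12 m32 hq p0 s2 hs hu hc.
set q := p * n.
have ds0 : 0 <= d * s by nra.
have ds_small : 32 * (d * s) <= n by nra.
have cross_big : (15/16) * (s * q) <= p * (s * c).
  have s_le : 12 * s <= d * s by nra.
  have c_big : 15 / 16 * n <= c by lra.
  have ps0 : 0 <= p * s by apply: mulr_ge0; lra.
  have := ler_wpM2l ps0 c_big; rewrite /q; lra.
have log_small : L * (s + u) <= s * q / 8.
  have h1 : L * (s + u) <= L * ((d + 1) * s) by apply: ler_wpM2l; lra.
  have h2 : (8 * d + 8) * L <= q by rewrite /q; lra.
  have s0 : 0 <= s by lra.
  have := ler_wpM2l s0 h2; lra.
have q16 : 16 <= q.
  have : 0 <= (8 * d + 12) * (L - 1) by apply: mulr_ge0; lra.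
  rewrite /q; lra.
have : 2 * q <= s * q by apply: ler_wpM2r; lra.
rewrite /q in cross_big log_small q16 * => sq.
lra.
Qed.

Lemma natr_gt0_of_ln_ge1 (R : realType) n : 1 <= ln (n%:R : R) -> (0 : R) < n%:R.
Proof. by rewrite ltr0n lt0n; apply: contraTneq => ->; rewrite ln0 // ler10. Qed.

Lemma bad_pair_avoid_prob_le (R : realType) n (S U : {set 'I_n}) (p d m : R) :
  1 <= ln (n%:R : R) -> 12 <= d -> 32 <= m ->
  (8 * d + 12) * ln (n%:R : R) <= p * n%:R -> 0 < p <= 1 -> bad_pair d m S U ->
  (1 - p) ^+ (#|S| * #|~: (S :|: U)|) <=
  (n%:R^-1) ^+ #|S| * (n%:R^-1) ^+ #|U| * (expR (-2) * expR (- (3 / 2) * p * n%:R)).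
Proof.
move=> L1 d12 m32 hq /andP[p0 p1] /and3P[s2 hs hu].
have n0 := natr_gt0_of_ln_ge1 L1.
have invnE : (n%:R : R)^-1 = expR (- ln n%:R) by rewrite expRN lnK.
apply: (le_trans (y := expR (- p) ^+ (#|S| * #|~: (S :|: U)|))).
  by rewrite lerXn2r ?nnegrE ?expR_ge0 ?subr_ge0 // expR_ge1Dx.
rewrite invnE -!expRM_natr -!expRD ler_expR.
have hs' : #|S|%:R * (d * m) <= (n%:R : R).
  by rewrite -ler_pdivlMr //; apply: mulr_gt0; lra.
have hc : (n%:R : R) - #|S|%:R - #|U|%:R <= #|~: (S :|: U)|%:R.
  have := cardsC (S :|: U); have := cardsU S U; rewrite card_ord => hU hC.
  have : (n <= #|~: (S :|: U)| + #|S| + #|U|)%N by lia.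
  by rewrite -(ler_nat R) !natrD; lra.
have s2' : (2 : R) <= #|S|%:R by rewrite (ler_nat R 2).
have := expansion_exponent_le L1 d12 m32 hq p0 s2' hs' (ltW hu) hc.
rewrite natrM; lra.
Qed.

Lemma gnp_prob_bad_event_le_expR (R : realType) n (p d m : R) :
  1 <= ln (n%:R : R) -> 12 <= d -> 32 <= m ->
  (8 * d + 12) * ln (n%:R : R) <= p * n%:R -> 0 < p <= 1 ->
  gnp_prob n p (bad_event n d m) <= expR (- (3 / 2) * p * n%:R).
Proof.
move=> L1 d12 m32 hq /andP[p0 p1].
set x : R := n%:R^-1; set K := expR (-2) * expR (- (3 / 2) * p * n%:R).
have x0 : 0 <= x by rewrite invr_ge0.
have K0 : 0 <= K by rewrite mulr_ge0 ?expR_ge0.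
apply: (le_trans (@gnp_prob_bad_event_union_bound R n p d m _)); first by rewrite ltW.
apply: (le_trans (y := \sum_(S : {set 'I_n}) \sum_(U : {set 'I_n}) x ^+ #|S| * x ^+ #|U| * K)).
  apply: ler_sum => S _; apply: ler_sum => U _; case: ifP => [bad|_].
    by apply: (bad_pair_avoid_prob_le L1 d12 m32 hq _ bad); rewrite p0.
  by rewrite !mulr_ge0 ?exprn_ge0.
have -> : \sum_(S : {set 'I_n}) \sum_(U : {set 'I_n}) x ^+ #|S| * x ^+ #|U| * K =
          (\sum_(S : {set 'I_n}) x ^+ #|S|) * (\sum_(U : {set 'I_n}) x ^+ #|U|) * K.
  by rewrite big_distrlr mulr_suml; apply: eq_bigr => S _; rewrite mulr_suml.
rewrite sum_subsets_expr card_ord.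
have e_bound := exprn_invnD1_le_expR1 R n.
have : (x + 1) ^+ n * (x + 1) ^+ n <= expR 1 * expR 1.
  by apply: ler_pM; rewrite ?exprn_ge0 ?addr_ge0.
move=> /(ler_wpM2r K0) /le_trans; apply.
by rewrite /K mulrA -!expRD (_ : 1 + 1 + -2 = 0 :> R) ?add0r //; lra.
Qed.

(* With [t = (log n)^(1/3)]: [log d <= t] and [log log n < 3t], so [m >= t/3]. *)
Lemma m_param_ge32 (R : realType) n (d : R) :
  96 ^+ 3 <= ln (n%:R : R) -> expR (expR 1) <= ln (n%:R : R) ->
  12 <= d -> d <= expR (ln (n%:R : R) `^ 3^-1) -> 32 <= m_param n d.
Proof.
rewrite /m_param; set L := ln (n%:R : R) => L96 Le d12 dle.
have L0 : 0 < L by apply: lt_le_trans L96; rewrite exprn_gt0.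
set t := L `^ 3^-1.
have t0 : 0 < t by rewrite powR_gt0.
have t3 : t ^+ 3 = L.
  by rewrite -powR_mulrn ?ltW // /t -powRrM mulVf ?powRr1 ?ltW // pnatr_eq0.
have t96 : 96 <= t.
  by rewrite -(ler_pXn2r (_ : (0 < 3)%N)) ?nnegrE ?t3 ?powR_ge0.
have lnL_lt : ln L < 3 * t.
  have lnt : ln t = ln L / 3 by rewrite ln_powR mulrC.
  by have := ln_sublinear t0; rewrite lnt; lra.
have lnd0 : 0 < ln d by apply: ln_gt0; lra.
have lnd_le : ln d <= t by rewrite -[t]expRK ler_ln // posrE; lra.
have lnL_ge : expR 1 <= ln L by rewrite -[expR 1]expRK ler_ln // posrE expR_gt0.
have lnL0 : 0 < ln L by apply: lt_le_trans lnL_ge; exact: expR_gt0.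
have lnlnL : 1 <= ln (ln L) by rewrite -[1]expRK ler_ln // posrE expR_gt0.
rewrite ler_pdivlMr; last exact: mulr_gt0.
have h1 : L <= L * ln (ln L) by rewrite ler_peMr // ltW.
have h2 : ln d * ln L <= t * (3 * t) by apply: ler_pM; lra.
have h3 : 96 * (t * t) <= t * (t * t) by apply: ler_wpM2r; [nra|].
have h4 : L = t * (t * t) by rewrite -t3 !exprS expr0 mulr1.
lra.
Qed.

Lemma eventually_ln_natr_ge (R : realType) (C : R) :
  exists N, forall n, (N <= n)%N -> C <= ln (n%:R : R).
Proof.
exists (Num.trunc (expR C)).+1 => n hn.
have nC : expR C <= n%:R.
  by apply: le_trans (ltW (truncnS_gt (expR C))) _; rewrite ler_nat.
by rewrite -[C]expRK ler_ln // posrE ?expR_gt0 //; apply: lt_le_trans nC; apply: expR_gt0.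
Qed.

Theorem lemma17 (R : realType) (d p : nat -> R) :
  (exists n0 : nat, forall n : nat, (n0 <= n)%N ->
     12 <= d n <= expR ((ln (n%:R : R)) `^ (3^-1))) ->
  (exists n0 : nat, forall n : nat, (n0 <= n)%N ->
     (8 * d n + 12) * ln (n%:R : R) / n%:R <= p n <= 1) ->
  exists N : nat, forall n : nat, (N <= n)%N ->
    gnp_prob n (p n) (bad_event n (d n) (m_param n (d n)))
      <= expR (- (3 / 2) * p n * n%:R).
Proof.
move=> [n1 Hd] [n2 Hp].
have [n3 Hln] := eventually_ln_natr_ge (Num.max (96 ^+ 3) (expR (expR 1)) : R).
exists (maxn n1 (maxn n2 n3)) => n; rewrite !geq_max => /and3P[hn1 hn2 hn3].
have /andP[d12 dle] := Hd n hn1.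
have /andP[p_ge p1] := Hp n hn2.
have /andP[L96 Le] : (96 ^+ 3 <= ln (n%:R : R)) && (expR (expR 1) <= ln (n%:R : R)).
  by rewrite -ge_max; apply: Hln.
have L1 : 1 <= ln (n%:R : R) by apply: le_trans L96; rewrite exprn_ege1 // ler1n.
have n0 := natr_gt0_of_ln_ge1 L1.
have pn : (8 * d n + 12) * ln (n%:R : R) <= p n * n%:R by rewrite -ler_pdivrMr.
have p0 : 0 < p n.
  have : 0 < p n * n%:R by apply: lt_le_trans pn; apply: mulr_gt0; lra.
  by rewrite pmulr_lgt0.
apply: gnp_prob_bad_event_le_expR; rewrite ?p0 ?p1 //.
exact: m_param_ge32.
Qed.
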